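(* Let $\mathcal{H}_{C}=\mathcal{H}_{A}\oplus\mathcal{H}_{B}$ be a finite-dimensional Hilbert space decomposed into two nontrivial orthogonal subspaces with orthogonal projectors $\hat P_{AA},\hat P_{BB}$ ($\hat P_{AA}\hat P_{BB}=0$, $\hat P_{AA}+\hat P_{BB}=\hat I_{CC}$). Let $\Phi_{CC}$ be a quantum channel (completely positive trace-preserving map) on $\mathcal{L}(\mathcal{H}_C)$ with Kraus set $\{\hat M^{(j)}_{CC}\}_j$. Then $\Phi_{CC}$ is a Partially Coherent Direct Sum (PCDS) channel if and only if every Kraus operator is block diagonal, i.e. $\hat M^{(j)}_{CC}=\hat M^{(j)}_{AA}+\hat M^{(j)}_{BB}$ for all $j$, equivalently $\hat M^{(j)}_{AB}=\hat M^{(j)}_{BA}=0$ for all $j$, where $\hat M^{(j)}_{XY}:=\hat P_{XX}\hat M^{(j)}_{CC}\hat P_{YY}$.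
   Context: For $X,Y\in\{A,B\}$ and an operator $\hat\Theta_{CC}$ on $\mathcal{H}_C$ write $\hat\Theta_{XY}:=\hat P_{XX}\hat\Theta_{CC}\hat P_{YY}$, viewed as a linear map $\mathcal{H}_Y\to\mathcal{H}_X$. A channel $\Phi_{CC}$ on $\mathcal{H}_C$ is called PCDS if there exist linear maps $\Phi_{AA}$ on $\mathcal{L}(\mathcal{H}_A)$, $\Phi_{BB}$ on $\mathcal{L}(\mathcal{H}_B)$, $\Phi^{(off)}_{AB}$ on $\mathcal{L}(\mathcal{H}_B\to\mathcal{H}_A)$ and $\Phi^{(off)}_{BA}$ on $\mathcal{L}(\mathcal{H}_A\to\mathcal{H}_B)$ such that for every operator $\hat\Theta_{CC}$, $\Phi_{CC}[\hat\Theta_{CC}]=\Phi_{AA}[\hat\Theta_{AA}]+\Phi_{BB}[\hat\Theta_{BB}]+\Phi^{(off)}_{AB}[\hat\Theta_{AB}]+\Phi^{(off)}_{BA}[\hat\Theta_{BA}]$, i.e. in block form $\begin{pmatrix}\hat\Theta_{AA}&\hat\Theta_{AB}\\ \hat\Theta_{BA}&\hat\Theta_{BB}\end{pmatrix}\mapsto\begin{pmatrix}\Phi_{AA}[\hat\Theta_{AA}]&\Phi^{(off)}_{AB}[\hat\Theta_{AB}]\\ \Phi^{(off)}_{BA}[\hat\Theta_{BA}]&\Phi_{BB}[\hat\Theta_{BB}]\end{pmatrix}$. *)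

(* Complex Hilbert space H_C = C^n, operators = 'M[C]_n,
   with C an arbitrary numClosedFieldType (e.g. algC, or complex R). *)
From HB Require Import structures.
From mathcomp Require Import all_boot all_order all_algebra.
Set Implicit Arguments. Unset Strict Implicit. Unset Printing Implicit Defensive.
Import Order.TTheory GRing.Theory Num.Theory.
Local Open Scope ring_scope.

Definition adj (C : numClosedFieldType) (n : nat) (M : 'M[C]_n) : 'M[C]_n :=
  (map_mx Num.conj M)^T.

Definition orth_proj (C : numClosedFieldType) (n : nat) (P : 'M[C]_n) : Prop :=
  adj P = P /\ P *m P = P.

Definition kraus_channel (C : numClosedFieldType) (n k : nat)
  (Phi : 'M[C]_n -> 'M[C]_n) (M : 'I_k -> 'M[C]_n) : Prop :=
  (forall X, Phi X = \sum_(j < k) M j *m X *m adj (M j)) /\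
  \sum_(j < k) adj (M j) *m M j = 1%:M.

(* F is a linear map L(H_Y -> H_X) -> L(H_Y -> H_X), where operators H_Y -> H_X
   are represented as matrices Theta with PX Theta PY = Theta.  F is given on all
   of 'M_n, but only its behaviour on the block subspace is used. *)
Definition block_map (C : numClosedFieldType) (n : nat) (PX PY : 'M[C]_n)
  (F : 'M[C]_n -> 'M[C]_n) : Prop :=
  (forall (a : C) (X Y : 'M[C]_n), F (a *: X + Y) = a *: F X + F Y) /\
  (forall Theta, PX *m Theta *m PY = Theta -> PX *m F Theta *m PY = F Theta).

Definition PCDS (C : numClosedFieldType) (n : nat) (PA PB : 'M[C]_n)
  (Phi : 'M[C]_n -> 'M[C]_n) : Prop :=
  exists FAA FBB FAB FBA : 'M[C]_n -> 'M[C]_n,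
    [/\ block_map PA PA FAA, block_map PB PB FBB,
        block_map PA PB FAB, block_map PB PA FBA &
        forall Theta : 'M[C]_n,
          Phi Theta = FAA (PA *m Theta *m PA) + FBB (PB *m Theta *m PB)
                    + FAB (PA *m Theta *m PB) + FBA (PB *m Theta *m PA)].

From HB Require Import structures.
From mathcomp Require Import all_boot all_order all_algebra.
Import Order.TTheory GRing.Theory Num.Theory.
Set Implicit Arguments. Unset Strict Implicit. Unset Printing Implicit Defensive.
Local Open Scope ring_scope.

(* If Phi is PCDS then Phi(P_A) = F_AA(P_A) lies in the A block, so
   P_B Phi(P_A) P_B = sum_j (P_B M_j P_A)(P_B M_j P_A)^dagger vanishes; a vanishing
   sum of positive semidefinite terms forces every P_B M_j P_A to be 0, and
   symmetrically for P_A M_j P_B.  Conversely, block-diagonal Kraus operators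
   commute with P_A and P_B, hence Phi commutes with every compression
   X |-> P_X X P_Y and Phi itself can serve as each of the four block maps. *)

Section Adjoint.

Variables (C : numClosedFieldType) (n : nat).
Implicit Types (P Q : 'M[C]_n).

Lemma adjM (A B : 'M[C]_n) : adj (A *m B) = adj B *m adj A.
Proof. by rewrite /adj (map_mxM Num.conj) trmx_mul. Qed.

Lemma adj0 : adj (0 : 'M[C]_n) = 0.
Proof. by apply/matrixP=> i j; rewrite /adj !mxE conjC0. Qed.

Lemma orth_proj_mul0C P Q : orth_proj P -> orth_proj Q -> P *m Q = 0 -> Q *m P = 0.
Proof. by move=> [aP _] [aQ _] PQ; rewrite -aP -aQ -adjM PQ adj0. Qed.

Lemma sum_mul_adj_eq0 (k : nat) (Y : 'I_k -> 'M[C]_n) :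
  \sum_(j < k) Y j *m adj (Y j) = 0 -> forall j, Y j = 0.
Proof.
move=> sum0 j; apply/matrixP=> i l; rewrite mxE.
have entry_ge0 (Z : 'M[C]_n) m : predT m -> 0 <= Z i m * adj Z m i.
  by rewrite /adj !mxE => _; exact: mul_conjC_ge0.
have diag_ge0 (Z : 'M[C]_n) : 0 <= (Z *m adj Z) i i.
  by rewrite mxE; apply: sumr_ge0 => m; apply: entry_ge0.
have diag0 : (Y j *m adj (Y j)) i i = 0.
  have := congr1 (fun A : 'M[C]_n => A i i) sum0; rewrite /= summxE mxE.
  by move/(psumr_eq0P (fun j0 _ => diag_ge0 (Y j0))); apply.
move: diag0; rewrite mxE => /(psumr_eq0P (entry_ge0 (Y j)))/(_ l isT).
by rewrite /adj !mxE => /eqP; rewrite mul_conjC_eq0 => /eqP.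
Qed.

End Adjoint.

Section KrausChannel.

Variables (C : numClosedFieldType) (n k : nat).
Variables (Phi : 'M[C]_n -> 'M[C]_n) (M : 'I_k -> 'M[C]_n).
Hypothesis kraus : kraus_channel Phi M.
Implicit Types (P Q X : 'M[C]_n).

Lemma kraus_additive X Y : Phi (X + Y) = Phi X + Phi Y.
Proof.
rewrite !(proj1 kraus) -big_split; apply: eq_bigr => j _ /=.
by rewrite mulmxDr mulmxDl.
Qed.

Lemma kraus_scalable (a : C) X : Phi (a *: X) = a *: Phi X.
Proof.
rewrite !(proj1 kraus) scaler_sumr; apply: eq_bigr => j _.
by rewrite -scalemxAr -scalemxAl.
Qed.

Lemma kraus_compress_proj P Q : adj P = P -> P *m P = P -> adj Q = Q ->
  Q *m Phi P *m Q = \sum_(j < k) (Q *m M j *m P) *m adj (Q *m M j *m P).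
Proof.
move=> aP iP aQ; rewrite (proj1 kraus) mulmx_sumr mulmx_suml.
apply: eq_bigr => j _; rewrite !adjM aP aQ -!mulmxA; congr (_ *m (_ *m _)).
by rewrite !mulmxA iP.
Qed.

Lemma kraus_offdiag_eq0 P Q : adj P = P -> P *m P = P -> adj Q = Q ->
  Q *m Phi P *m Q = 0 -> forall j, Q *m M j *m P = 0.
Proof.
by move=> aP iP aQ; rewrite kraus_compress_proj // => /sum_mul_adj_eq0.
Qed.

Lemma kraus_compress P Q X :
  (forall j, P *m M j = M j *m P) -> (forall j, Q *m M j = M j *m Q) ->
  adj Q = Q -> P *m Phi X *m Q = Phi (P *m X *m Q).
Proof.
move=> cP cQ aQ; rewrite !(proj1 kraus) mulmx_sumr mulmx_suml.
apply: eq_bigr => j _.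
have cQ' : adj (M j) *m Q = Q *m adj (M j) by rewrite -aQ -!adjM cQ.
by rewrite -!mulmxA cQ' !mulmxA cP.
Qed.

Lemma kraus_block_map P Q :
  (forall j, P *m M j = M j *m P) -> (forall j, Q *m M j = M j *m Q) ->
  adj Q = Q -> block_map P Q Phi.
Proof.
move=> cP cQ aQ; split=> [a X Y|Th PThQ]; first by rewrite kraus_additive kraus_scalable.
by rewrite kraus_compress // PThQ.
Qed.

End KrausChannel.

Section BlockDecomposition.

Variables (C : numClosedFieldType) (n : nat) (PA PB : 'M[C]_n).
Hypothesis PA_PB_1 : PA + PB = 1%:M.

Lemma block_decomp (X : 'M[C]_n) :
  X = PA *m X *m PA + PB *m X *m PB + PA *m X *m PB + PB *m X *m PA.
Proof.
rewrite -{1}[X]mul1mx -{1}[X]mulmx1 -PA_PB_1 !mulmxDl !mulmxDr !mulmxA.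
by rewrite -!addrA; congr (_ + _); rewrite [RHS]addrC -addrA.
Qed.

Lemma block_diag_commute (Y : 'M[C]_n) :
  PA *m Y *m PB = 0 -> PB *m Y *m PA = 0 -> PA *m Y = Y *m PA.
Proof.
move=> AYB BYA; rewrite -[LHS]mulmx1 -[RHS]mul1mx -PA_PB_1.
by rewrite mulmxDr mulmxDl !mulmxA AYB BYA addr0.
Qed.

End BlockDecomposition.

Lemma block_map0 (C : numClosedFieldType) (n : nat) (PX PY : 'M[C]_n)
  (F : 'M[C]_n -> 'M[C]_n) : block_map PX PY F -> F 0 = 0.
Proof.
case=> lin _; have := lin 1 0 0; rewrite !scale1r addr0 => F00.
by apply: (addrI (F 0)); rewrite addr0 -F00.
Qed.

Section PCDSChannel.

Variables (C : numClosedFieldType) (n : nat) (PA PB : 'M[C]_n).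
Variable Phi : 'M[C]_n -> 'M[C]_n.

Lemma PCDS_sym : PCDS PA PB Phi -> PCDS PB PA Phi.
Proof.
case=> [FAA [FBB [FAB [FBA [bAA bBB bAB bBA dec]]]]].
exists FBB, FAA, FBA, FAB; split=> // Th.
by rewrite dec [FAA _ + _]addrC -!addrA [FAB _ + _]addrC.
Qed.

Lemma PCDS_compress_proj_eq0 : PA *m PA = PA -> PA *m PB = 0 -> PB *m PA = 0 ->
  PCDS PA PB Phi -> PB *m Phi PA *m PB = 0.
Proof.
move=> iA AB BA [FAA [FBB [FAB [FBA [[_ bAA] bBB bAB bBA dec]]]]].
rewrite dec !iA AB BA !mul0mx (block_map0 bBB) (block_map0 bAB) (block_map0 bBA).
by rewrite !addr0 -(bAA PA) ?iA // !mulmxA BA !mul0mx.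
Qed.

End PCDSChannel.

Theorem theorem1 (C : numClosedFieldType) (n k : nat) (PA PB : 'M[C]_n)
  (Phi : 'M[C]_n -> 'M[C]_n) (M : 'I_k -> 'M[C]_n) :
  orth_proj PA -> orth_proj PB ->
  PA *m PB = 0 -> PA + PB = 1%:M ->
  PA != 0 -> PB != 0 ->
  kraus_channel Phi M ->
  (PCDS PA PB Phi <->
   forall j : 'I_k, PA *m M j *m PB = 0 /\ PB *m M j *m PA = 0).
Proof.
move=> oA oB AB ApB _ _ kraus; have BA := orth_proj_mul0C oA oB AB.
have [[aA iA] [aB iB]] := (oA, oB).
split=> [pcds j | blk].
  split; apply: (kraus_offdiag_eq0 kraus) => //.
    exact: PCDS_compress_proj_eq0 (PCDS_sym pcds).
  exact: PCDS_compress_proj_eq0 pcds.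
have BpA : PB + PA = 1%:M by rewrite addrC.
have cA j : PA *m M j = M j *m PA.
  have [AjB BjA] := blk j; exact: (block_diag_commute ApB AjB BjA).
have cB j : PB *m M j = M j *m PB.
  have [AjB BjA] := blk j; exact: (block_diag_commute BpA BjA AjB).
exists Phi, Phi, Phi, Phi.
split; try by apply: (kraus_block_map kraus).
by move=> Th; rewrite {1}(block_decomp ApB Th) !(kraus_additive kraus).
Qed.
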